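(* Let $G=(V,E)$ be a forest and $\mathcal T$ a good triangulation of $\mathcal C_G$. Let $E_1,D\subseteq E$ be disjoint and, for each $f\in D$, choose $p_f\in\{\overleftarrow e_f,\overrightarrow e_f\}$. Then there exists a unique maximal simplex $S\in\mathcal T$ with $\widetilde E(S)=E_1$, $D(S)=D$ and $p_f\in S$ for all $f\in D$.
   Context: For a finite undirected multigraph $G=(V,E)$ (loops, parallel edges and isolated nodes allowed) with $n=|V|$, $m=|E|$, work in $\mathbb{R}^V\times\mathbb{R}^E\cong\mathbb{R}^{n+m}$ with standard basis vectors $e_u$ ($u\in V$), $e_f$ ($f\in E$). Fix for each edge $f$ an ordering $(u,v)$ of its endpoints ($u=v$ for a loop) and set $\widetilde e_f=e_u+e_v-e_f$, $\overleftarrow e_f=e_u-e_v+e_f$, $\overrightarrow e_f=-e_u+e_v+e_f$ (so for a loop $\overleftarrow e_f=\overrightarrow e_f=e_f$). The cosmological polytope $\mathcal C_G$ is the convex hull of $\{e_f,\widetilde e_f,\overleftarrow e_f,\overrightarrow e_f: f\in E\}\cup\{e_u: u\in V\}$; these are exactly its lattice points, and it is an $(n+m-1)$-dimensional polytope in the hyperplane $\sum_i x_i=1$. A good triangulation of $\mathcal C_G$ is a regular triangulation (induced by a height function on the lattice points of $\mathcal C_G$) whose vertex set is the set of all lattice points of $\mathcal C_G$ and which contains the standard simplex $\mathrm{conv}\{e_u,e_f: u\in V, f\in E\}$ as a maximal cell; simplices are identified with their vertex sets. For a simplex $S\in\mathcal T$: the selected nodes are $V(S)=\{u\in V: e_u\in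 S\}$; the squiggly edges $\widetilde E(S)=\{f:\widetilde e_f\in S\}$; the selected edges $\widehat E(S)=\{f: e_f\in S\}$; for non-loop edges $f$, $f\in\overleftarrow E(S)$ iff $\overleftarrow e_f\in S$ and $f\in\overrightarrow E(S)$ iff $\overrightarrow e_f\in S$ (loops are never in $\overleftarrow E(S)\cup\overrightarrow E(S)$); the double edges are $D(S)=(\overleftarrow E(S)\cup\overrightarrow E(S))\cap\widehat E(S)$. *)

From HB Require Import structures.
From mathcomp Require Import all_boot all_order all_algebra.
From mathcomp Require Import boolp classical_sets reals.
Set Implicit Arguments. Unset Strict Implicit. Unset Printing Implicit Defensive.
Import Order.TTheory GRing.Theory Num.Theory.
Local Open Scope ring_scope.
Local Open Scope classical_set_scope.

(* A finite multigraph: nodes 'I_n, edges 'I_m; edge f has the fixed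
   ordered endpoint pair (src f, tgt f) (src f = tgt f for a loop). *)

(** Trails: a sequence of (edge, direction) pairs; direction true means the
    edge f is traversed from src f to tgt f.  Returns the end node if the
    sequence is a walk starting at v. *)
Fixpoint trail_end (n m : nat) (src tgt : 'I_m -> 'I_n) (v : 'I_n)
    (s : seq ('I_m * bool)) : option 'I_n :=
  match s with
  | [::] => Some v
  | (f, d) :: s' =>
      if (if d then src f else tgt f) == v
      then trail_end src tgt (if d then tgt f else src f) s'
      else None
  end.

(** A forest: a multigraph with no cycle, i.e. no closed walk of positive
    length using pairwise distinct edges (loops and parallel edges are cycles). *)
Definition is_forest (n m : nat) (src tgt : 'I_m -> 'I_n) : Prop :=
  forall (v : 'I_n) (s : seq ('I_m * bool)),
    s != [::] -> uniq (map fst s) -> trail_end src tgt v s <> Some v.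

Section Cosmo.
Variables (R : realType) (n m : nat) (src tgt : 'I_m -> 'I_n).

Definition eV (u : 'I_n) : 'rV[R]_(n + m) := delta_mx 0 (lshift m u).
Definition eE (f : 'I_m) : 'rV[R]_(n + m) := delta_mx 0 (rshift n f).
Definition eT (f : 'I_m) : 'rV[R]_(n + m) := eV (src f) + eV (tgt f) - eE f.
Definition eL (f : 'I_m) : 'rV[R]_(n + m) := eV (src f) - eV (tgt f) + eE f.
Definition eR (f : 'I_m) : 'rV[R]_(n + m) := - eV (src f) + eV (tgt f) + eE f.

Definition cosmo_pts : set 'rV[R]_(n + m) :=
  [set x | (exists u, x = eV u) \/
           (exists f, x = eE f \/ x = eT f \/ x = eL f \/ x = eR f)].

Definition std_simplex : set 'rV[R]_(n + m) :=
  [set x | (exists u, x = eV u) \/ (exists f, x = eE f)].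

Definition lin (c : 'cV[R]_(n + m)) (x : 'rV[R]_(n + m)) : R := (x *m c) 0 0.

(** Cells of the regular subdivision induced by the height function h:
    vertex sets of lower faces of the lifted configuration.  Since all points
    lie in the hyperplane sum x_i = 1, affine functionals can be taken linear. *)
Definition lower_cell (h : 'rV[R]_(n + m) -> R) (S : set 'rV[R]_(n + m)) :=
  exists c : 'cV[R]_(n + m),
    (forall p, cosmo_pts p -> lin c p <= h p) /\
    S = [set p | cosmo_pts p /\ lin c p = h p].

(** Full-dimensional (i.e. (n+m-1)-dimensional, spanning the hyperplane):
    no nonzero linear functional vanishes on S. *)
Definition full_dim (S : set 'rV[R]_(n + m)) :=
  forall c : 'cV[R]_(n + m), (forall p, S p -> lin c p = 0) -> c = 0.

Definition max_cell (h : 'rV[R]_(n + m) -> R) (S : set 'rV[R]_(n + m)) :=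
  lower_cell h S /\ full_dim S.

Definition has_card (S : set 'rV[R]_(n + m)) (k : nat) :=
  exists s : seq 'rV[R]_(n + m),
    [/\ uniq s, size s = k & S = [set x | x \in s]].

(** h induces a good triangulation of C_G: the regular subdivision is a
    triangulation (every maximal cell is an (n+m-1)-simplex, i.e. a spanning
    set with n+m points), its vertex set is all lattice points, and the
    standard simplex is a maximal cell. *)
Definition good_height (h : 'rV[R]_(n + m) -> R) : Prop :=
  [/\ (forall S, max_cell h S -> has_card S (n + m)),
      (forall p, cosmo_pts p -> exists S, max_cell h S /\ S p)
    & max_cell h std_simplex].

Definition squiggly (S : set 'rV[R]_(n + m)) (f : 'I_m) : Prop := S (eT f).
Definition double_edge (S : set 'rV[R]_(n + m)) (f : 'I_m) : Prop :=
  src f != tgt f /\ (S (eL f) \/ S (eR f)) /\ S (eE f).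

End Cosmo.

From HB Require Import structures.
From mathcomp Require Import all_boot all_order all_algebra.
From mathcomp Require Import boolp classical_sets reals.
From mathcomp Require Import lra.
Set Implicit Arguments. Unset Strict Implicit. Unset Printing Implicit Defensive.
Import Order.TTheory GRing.Theory Num.Theory.
Local Open Scope ring_scope.
Local Open Scope classical_set_scope.

(* After subtracting the linear functional that cuts out the standard simplex,
   the heights vanish on the e_u, e_f and are positive on all other lattice
   points.  A cell is then cut out by a functional with node values y <= 0 and
   edge values z, subject to one inequality per lattice point.  The prescribed
   data force y(src f) - y(tgt f) on each f in D; since G is a forest such a
   potential exists, and it can be normalised to vanish somewhere on each
   component of (V, D).  The edge values are then the largest ones allowed,
   and full-dimensionality together with the simplex condition yields exactly
   the prescribed squiggly and double edges.  For uniqueness, the nodes where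
   one such functional exceeds another carry a functional vanishing on the
   second face, which full-dimensionality forces to be zero. *)

Lemma small_seq_annihilator (F : fieldType) (N : nat) (s : seq 'rV[F]_N) :
  (size s < N)%N -> exists2 g : 'cV[F]_N, g != 0 & forall x, x \in s -> x *m g = 0.
Proof.
move=> small_s; pose A : 'M[F]_(size s, N) := \matrix_i nth 0 s i.
have /rowV0Pn[v /sub_kermxP vA v_neq0] : kermx A^T != 0.
  rewrite -mxrank_eq0 mxrank_ker mxrank_tr subn_eq0 -ltnNge.
  exact: leq_ltn_trans (rank_leq_row A) small_s.
exists v^T; first by rewrite trmx_eq0.
have Av : A *m v^T = 0 by rewrite -[A]trmxK -trmx_mul vA trmx0.
move=> x x_s; have x_idx : (index x s < size s)%N by rewrite index_mem.
have -> : x = row (Ordinal x_idx) A by apply/rowP => j; rewrite !mxE nth_index.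
by rewrite -row_mul Av row0.
Qed.

Section Trails.
Variables (n m : nat) (src tgt : 'I_m -> 'I_n).
Local Notation trail_end := (trail_end src tgt).

Lemma trail_end_cat v s1 s2 :
  trail_end v (s1 ++ s2) = obind (trail_end^~ s2) (trail_end v s1).
Proof. by elim: s1 v => [|[f d] s1 IHs] v //=; case: ifP. Qed.

Lemma trail_end_invariant (T : Type) (phi : 'I_n -> T) (P : pred 'I_m) s x z :
  {in P, forall f, phi (src f) = phi (tgt f)} ->
  trail_end x s = Some z -> {subset map fst s <= P} ->
  phi z = phi x /\ {in map fst s, forall f, phi (src f) = phi x}.
Proof.
move=> phiP; elim: s x => [|[f d] s IHs] x /=; first by case=> ->.
case: eqP => // fx s_end sP.
have Pf : P f by apply: sP; rewrite inE eqxx.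
have [phi_z phi_s] : phi z = phi (if d then tgt f else src f) /\
    {in map fst s, forall g, phi (src g) = phi (if d then tgt f else src f)}.
  by apply: IHs s_end _ => g gs; apply: sP; rewrite inE gs orbT.
have phi_f : phi (src f) = phi x /\ phi (if d then tgt f else src f) = phi x.
  by rewrite -fx; case: (d) => //; rewrite phiP.
split=> [|g]; first by rewrite phi_z phi_f.2.
by rewrite inE => /predU1P[->|/phi_s ->]; [exact: phi_f.1|exact: phi_f.2].
Qed.

Lemma forest_no_loop f : is_forest src tgt -> src f != tgt f.
Proof.
move=> forestG; apply/eqP => loop_f.
by apply: (forestG (src f) [:: (f, true)]) => //=; rewrite eqxx loop_f.
Qed.

Definition trail_within (D : {set 'I_m}) x z := exists s,
  [/\ trail_end x s = Some z, uniq (map fst s) & {subset map fst s <= D}].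

Lemma trail_within_sub (D D' : {set 'I_m}) x z :
  D \subset D' -> trail_within D x z -> trail_within D' x z.
Proof.
by move=> /fintype.subsetP DD' [s [s_end s_uniq sD]]; exists s; split=> // g /sD /DD'.
Qed.

Lemma forest_trail_within_cut (D : {set 'I_m}) f :
  is_forest src tgt -> f \notin D -> ~ trail_within D (tgt f) (src f).
Proof.
move=> forestG fD [s [s_end s_uniq sD]].
apply: (forestG (tgt f) (rcons s (f, true))); first by case: (s).
  by rewrite map_rcons rcons_uniq s_uniq andbT; apply: contra fD => /sD.
by rewrite -cats1 trail_end_cat s_end /= eqxx.
Qed.

End Trails.

Section Potentials.
Variables (n m : nat) (src tgt : 'I_m -> 'I_n) (R : realDomainType) (t : 'I_m -> R).
Hypothesis forestG : is_forest src tgt.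
Local Notation trail_within := (trail_within src tgt).

Definition anchored_potential (D : {set 'I_m}) (y : 'I_n -> R) :=
  [/\ forall x, y x <= 0,
      {in D, forall f, y (src f) - y (tgt f) = t f}
    & forall x, exists2 r, y r = 0 & trail_within D r x].

(* [comp] labels the connected components of (V, D); each of them contains a
   zero of [y]. *)
Definition potential_classes (D : {set 'I_m}) (y : 'I_n -> R) (comp : 'I_n -> 'I_n) :=
  [/\ forall x, y x <= 0,
      {in D, forall f, y (src f) - y (tgt f) = t f},
      {in D, forall f, comp (src f) = comp (tgt f)},
      forall x z, comp x = comp z -> trail_within D x z
    & forall x, exists2 r, comp r = comp x & y r = 0].

Lemma potential_classes0 : potential_classes finset.set0 (fun=> 0) id.
Proof.
split=> // [f|f|x z ->|x]; rewrite ?inE //; last by exists x.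
by exists [::].
Qed.

Section Merge.
Variables (D : {set 'I_m}) (f : 'I_m) (y : 'I_n -> R) (comp : 'I_n -> 'I_n).
Hypotheses (fD : f \notin D) (classesD : potential_classes D y comp).

Lemma potential_classes_apart : comp (src f) != comp (tgt f).
Proof.
have [_ _ _ comp_trail _] := classesD.
by apply/eqP => /esym/comp_trail; apply: forest_trail_within_cut.
Qed.

Lemma trail_within_across (d : bool) x z :
  comp x = comp (if d then src f else tgt f) ->
  comp z = comp (if d then tgt f else src f) -> trail_within (f |: D) x z.
Proof.
have [_ _ compD comp_trail _] := classesD.
move=> /comp_trail[s1 [end1 uniq1 sub1]] /esym/comp_trail[s2 [end2 uniq2 sub2]].
have [comp1 in1] := trail_end_invariant compD end1 sub1.
have [_ in2] := trail_end_invariant compD end2 sub2.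
exists (s1 ++ (f, d) :: s2); split.
- by rewrite trail_end_cat end1 /= eqxx.
- have disj : ~~ has (mem (map fst s1)) (f :: map fst s2).
    rewrite /= negb_or (contra (sub1 f)) //=; apply/hasPn => g /in2 g2.
    apply/negP => /in1; rewrite g2 -comp1 => /eqP; apply/negP.
    by case: (d); rewrite ?potential_classes_apart // eq_sym potential_classes_apart.
  by rewrite map_cat cat_uniq uniq1 disj /= uniq2 (contra (sub2 f)).
- move=> g; rewrite map_cat mem_cat /= inE => /or3P[/sub1 gD|/eqP->|/sub2 gD];
    by rewrite !inE ?eqxx ?gD ?orbT.
Qed.

Definition merge_class (a b : 'I_n) x := if comp x == comp a then comp b else comp x.
Definition shift_class (a : 'I_n) (k : R) x := if comp x == comp a then y x + k else y x.

Lemma potential_classes_merge (a b : 'I_n) (k : R) :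
  (a, b) = (src f, tgt f) \/ (a, b) = (tgt f, src f) -> k <= 0 ->
  shift_class a k (src f) - shift_class a k (tgt f) = t f ->
  potential_classes (f |: D) (shift_class a k) (merge_class a b).
Proof.
have [y_le0 yD compD comp_trail anchor] := classesD.
move=> ab_f k_le0 y_f.
have ab : comp a != comp b.
  by case: ab_f => -[-> ->]; rewrite ?potential_classes_apart // eq_sym potential_classes_apart.
move: y_f; rewrite /shift_class /merge_class => y_f; split.
- by move=> x; case: ifP => _; have := y_le0 x; lra.
- move=> g /setU1P[->|gD] //; rewrite compD //.
  by case: ifP => _; have := yD g gD; lra.
- move=> g /setU1P[->|gD]; last by rewrite compD.
  by case: ab_f => -[<- <-]; rewrite eqxx if_same.
- move=> x z; have sub : D \subset f |: D by apply/fintype.subsetP => g gD; rewrite !inE gD orbT.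
  have across x' z' : comp x' = comp a -> comp z' = comp b -> trail_within (f |: D) x' z'.
    by case: ab_f => -[-> ->];
      [apply: (@trail_within_across true)|apply: (@trail_within_across false)].
  have across' x' z' : comp x' = comp b -> comp z' = comp a -> trail_within (f |: D) x' z'.
    by case: ab_f => -[-> ->];
      [apply: (@trail_within_across false)|apply: (@trail_within_across true)].
  case: eqP => xa; case: eqP => za.
  + by move=> _; apply: trail_within_sub sub _; apply: comp_trail; rewrite xa za.
  + by move=> xb; apply: across.
  + by move=> bz; apply: across'.
  + by move=> xz; apply: trail_within_sub sub _; apply: comp_trail.
- move=> x; have ba : (comp b == comp a) = false by rewrite eq_sym (negbTE ab).
  case: eqP => xa; first by have [r rb yr] := anchor b; exists r; rewrite rb ba.
  by have [r rx yr] := anchor x; exists r; rewrite rx; move/eqP/negbTE: xa => ->.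
Qed.

Lemma potential_classes_step : exists y' comp', potential_classes (f |: D) y' comp'.
Proof.
have ab := potential_classes_apart; pose del := y (src f) - y (tgt f) - t f.
have ba : (comp (tgt f) == comp (src f)) = false by rewrite eq_sym (negbTE ab).
have [del_le0|del_gt0] := leP del 0.
  exists (shift_class (tgt f) del), (merge_class (tgt f) (src f)).
  apply: potential_classes_merge; [by right|by []|].
  by rewrite /shift_class eqxx (negbTE ab) /del; lra.
exists (shift_class (src f) (- del)), (merge_class (src f) (tgt f)).
apply: potential_classes_merge; [by left|lra|].
by rewrite /shift_class eqxx ba /del; lra.
Qed.

End Merge.

Lemma exists_anchored_potential (D : {set 'I_m}) :
  exists y, anchored_potential D y.
Proof.
suff [y [comp [y_le0 yD _ comp_trail anchor]]] : exists y comp, potential_classes D y comp.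
  exists y; split=> // x; have [r rx yr] := anchor x.
  by exists r => //; apply: comp_trail.
rewrite -(set_enum D); elim: (enum D) (enum_uniq D) => [|f s IHs] /=.
  by move=> _; exists (fun=> 0), id; exact: potential_classes0.
move=> /andP[fs /IHs[y [comp classes]]].
by rewrite set_cons; apply: potential_classes_step classes; rewrite inE.
Qed.

End Potentials.

Section Coordinates.
Context {R : realType} {n m : nat} {src tgt : 'I_m -> 'I_n}.
Local Notation eV := (@eV R n m).
Local Notation eE := (@eE R n m).
Local Notation eT := (@eT R n m src tgt).
Local Notation eL := (@eL R n m src tgt).
Local Notation eR := (@eR R n m src tgt).
Local Notation lin := (@lin R n m).
Local Notation pts := (@cosmo_pts R n m src tgt).
Local Notation std_simplex := (@std_simplex R n m).

Definition node_coord (c : 'cV[R]_(n + m)) u := c (lshift m u) 0.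
Definition edge_coord (c : 'cV[R]_(n + m)) f := c (rshift n f) 0.

Definition coord_vec (y : 'I_n -> R) (z : 'I_m -> R) : 'cV[R]_(n + m) :=
  \col_i match split i with inl u => y u | inr f => z f end.

Lemma node_coord_vec y z u : node_coord (coord_vec y z) u = y u.
Proof. by rewrite /node_coord mxE (unsplitK (inl _ u)). Qed.

Lemma edge_coord_vec y z f : edge_coord (coord_vec y z) f = z f.
Proof. by rewrite /edge_coord mxE (unsplitK (inr _ f)). Qed.

Lemma node_coord0 u : node_coord 0 u = 0.
Proof. by rewrite /node_coord mxE. Qed.

Lemma edge_coord0 f : edge_coord 0 f = 0.
Proof. by rewrite /edge_coord mxE. Qed.

Lemma node_coordB c c' u : node_coord (c - c') u = node_coord c u - node_coord c' u.
Proof. by rewrite /node_coord !mxE. Qed.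

Lemma coord_inj c c' :
  node_coord c =1 node_coord c' -> edge_coord c =1 edge_coord c' -> c = c'.
Proof.
move=> cc'V cc'E; apply/matrixP => i j; rewrite ord1 -(splitK i).
by case: (split i) => [u|f]; [exact: cc'V|exact: cc'E].
Qed.

Lemma linD c x x' : lin c (x + x') = lin c x + lin c x'.
Proof. by rewrite /lin mulmxDl mxE. Qed.

Lemma linN c x : lin c (- x) = - lin c x.
Proof. by rewrite /lin mulNmx mxE. Qed.

Lemma lin_addc c c' x : lin (c + c') x = lin c x + lin c' x.
Proof. by rewrite /lin mulmxDr mxE. Qed.

Lemma lin_subc c c' x : lin (c - c') x = lin c x - lin c' x.
Proof. by rewrite /lin mulmxBr !mxE. Qed.

Lemma lin_delta c j : lin c (delta_mx 0 j) = c j 0.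
Proof. by rewrite /lin -rowE mxE. Qed.

Lemma lin_eV c u : lin c (eV u) = node_coord c u.
Proof. exact: lin_delta. Qed.

Lemma lin_eE c f : lin c (eE f) = edge_coord c f.
Proof. exact: lin_delta. Qed.

Lemma lin_eT c f :
  lin c (eT f) = node_coord c (src f) + node_coord c (tgt f) - edge_coord c f.
Proof. by rewrite /eT !(linD, linN) !lin_eV lin_eE. Qed.

Lemma lin_eL c f :
  lin c (eL f) = node_coord c (src f) - node_coord c (tgt f) + edge_coord c f.
Proof. by rewrite /eL !(linD, linN) !lin_eV lin_eE. Qed.

Lemma lin_eR c f :
  lin c (eR f) = - node_coord c (src f) + node_coord c (tgt f) + edge_coord c f.
Proof. by rewrite /eR !(linD, linN) !lin_eV lin_eE. Qed.

Lemma pts_eV u : pts (eV u). Proof. by left; exists u. Qed.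
Lemma pts_eE f : pts (eE f). Proof. by right; exists f; left. Qed.
Lemma pts_eT f : pts (eT f). Proof. by right; exists f; right; left. Qed.
Lemma pts_eL f : pts (eL f). Proof. by right; exists f; right; right; left. Qed.
Lemma pts_eR f : pts (eR f). Proof. by right; exists f; right; right; right. Qed.

Lemma std_simplex_lin_ge0 c p :
  (forall u, 0 <= node_coord c u) -> (forall f, 0 <= edge_coord c f) ->
  std_simplex p -> 0 <= lin c p.
Proof. by move=> cV cE [[u ->]|[f ->]]; rewrite ?lin_eV ?lin_eE. Qed.

Definition node_fun w := coord_vec (fun u => (u == w)%:R) (fun=> 0).
Definition edge_fun f := coord_vec (fun=> 0) (fun g => (g == f)%:R).

Lemma node_fun_ge0 w p : std_simplex p -> 0 <= lin (node_fun w) p.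
Proof.
by apply: std_simplex_lin_ge0 => [u|f]; rewrite ?node_coord_vec ?edge_coord_vec ?ler0n.
Qed.

Lemma edge_fun_ge0 f p : std_simplex p -> 0 <= lin (edge_fun f) p.
Proof.
by apply: std_simplex_lin_ge0 => [u|g]; rewrite ?node_coord_vec ?edge_coord_vec ?ler0n.
Qed.

Lemma eT_not_std f : ~ std_simplex (eT f).
Proof.
move/(edge_fun_ge0 f); rewrite lin_eT !node_coord_vec edge_coord_vec eqxx /=; lra.
Qed.

Lemma eL_not_std f : src f != tgt f -> ~ std_simplex (eL f).
Proof.
move=> loopfree /(node_fun_ge0 (tgt f)).
by rewrite lin_eL !node_coord_vec edge_coord_vec eqxx (negbTE loopfree) /=; lra.
Qed.

Lemma eR_not_std f : src f != tgt f -> ~ std_simplex (eR f).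
Proof.
move=> loopfree /(node_fun_ge0 (src f)).
by rewrite lin_eR !node_coord_vec edge_coord_vec eqxx eq_sym (negbTE loopfree) /=; lra.
Qed.

Definition arrow (left : 'I_m -> bool) f := if left f then eL f else eR f.

Lemma lin_arrow left c f : lin c (arrow left f) =
  (if left f then node_coord c (src f) - node_coord c (tgt f)
   else node_coord c (tgt f) - node_coord c (src f)) + edge_coord c f.
Proof. by rewrite /arrow; case: (left f); rewrite ?lin_eL ?lin_eR; lra. Qed.

Lemma arrow_not_std left f : src f != tgt f -> ~ std_simplex (arrow left f).
Proof. by rewrite /arrow; case: (left f); [exact: eL_not_std|exact: eR_not_std]. Qed.

Lemma lin_edge_fun_arrow left g f : lin (edge_fun f) (arrow left g) = (g == f)%:R.
Proof. by rewrite lin_arrow !node_coord_vec edge_coord_vec !subrr if_same add0r. Qed.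

Section StandardCell.
Variables (h : 'rV[R]_(n + m) -> R) (c0 : 'cV[R]_(n + m)).
Hypothesis std_cell : std_simplex = [set p | pts p /\ lin c0 p = h p].

Lemma std_cell_height0 p : std_simplex p -> h p - lin c0 p = 0.
Proof. by rewrite std_cell => -[_ ->]; rewrite subrr. Qed.

Lemma std_cell_height_gt0 p : (forall q, pts q -> lin c0 q <= h q) ->
  pts p -> ~ std_simplex p -> 0 < h p - lin c0 p.
Proof.
move=> c0_le Pp p_std; rewrite subr_gt0 lt_neqAle c0_le // andbT.
by apply/eqP => c0p; apply: p_std; rewrite std_cell.
Qed.

End StandardCell.

Lemma max_cell_shift h c0 S :
  max_cell src tgt h S <-> max_cell src tgt (fun p => h p - lin c0 p) S.
Proof.
rewrite /max_cell /lower_cell; split=> -[[c [c_le ->]] full]; split=> //.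
  exists (c - c0); split=> [p /c_le|]; first by rewrite lin_subc; lra.
  by apply/seteqP; split=> p /= [Pp]; rewrite lin_subc => ?; split=> //; lra.
exists (c + c0); split=> [p /c_le|].
  by rewrite lin_addc; lra.
by apply/seteqP; split=> p /= [Pp]; rewrite lin_addc => ?; split=> //; lra.
Qed.

Lemma full_dim_edge_point S f : S `<=` pts -> full_dim S ->
  S (eE f) \/ S (eT f) \/ S (eL f) \/ S (eR f).
Proof.
move=> S_pts full; apply: contrapT => noS.
have edge_fun_neq0 : edge_fun f != 0.
  by apply/eqP => /(congr1 (edge_coord^~ f)); rewrite edge_coord_vec edge_coord0 eqxx /=; lra.
apply/(negP edge_fun_neq0)/eqP/full => p Sp.
have [[u ->]|[g Pg]] := S_pts p Sp; first by rewrite lin_eV node_coord_vec.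
have [gf|gf] := eqVneq g f.
  by exfalso; apply: noS; rewrite -gf; move: Sp; case: Pg => [->|[->|[->|->]]]; tauto.
by case: Pg => [->|[->|[->|->]]]; rewrite ?lin_eE ?lin_eT ?lin_eL ?lin_eR
  ?node_coord_vec edge_coord_vec (negbTE gf) /=; lra.
Qed.

Lemma full_dim_card_separate S q : has_card S (n + m) -> full_dim S -> S q ->
  exists2 g, lin g q != 0 & forall p, S p -> p != q -> lin g p = 0.
Proof.
move=> [s [s_uniq s_size ->]] full /= qs.
have s_pos : (0 < size s)%N by case: (s) qs.
have [|g g_neq0 g_s] := @small_seq_annihilator _ _ (rem q s).
  by move: (ltn_predL (size s)); rewrite s_pos (size_rem qs) s_size => ->.
have g_vanish p : p \in s -> p != q -> lin g p = 0.
  by move=> ps pq; rewrite /lin g_s ?mxE // (mem_rem_uniq _ s_uniq) !inE pq.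
exists g; last exact: g_vanish.
apply: contra g_neq0 => /eqP gq; apply/eqP/full => p /= ps.
by have [->|] := eqVneq p q; [|exact: g_vanish].
Qed.

End Coordinates.

Section ReducedHeight.
Variables (R : realType) (n m : nat) (src tgt : 'I_m -> 'I_n) (H : 'rV[R]_(n + m) -> R).
Local Notation eV := (@eV R n m).
Local Notation eE := (@eE R n m).
Local Notation eT := (@eT R n m src tgt).
Local Notation eL := (@eL R n m src tgt).
Local Notation eR := (@eR R n m src tgt).
Local Notation lin := (@lin R n m).
Local Notation pts := (@cosmo_pts R n m src tgt).
Local Notation node_coord := (@node_coord R n m).
Local Notation edge_coord := (@edge_coord R n m).
Local Notation arrow := (@arrow R n m src tgt).

(* [H] is a height minus the functional of its standard cell (see
   [max_cell_shift]), so the standard simplex is the face of the zero functional. *)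
Hypothesis forestG : is_forest src tgt.
Hypotheses (H_eV : forall u, H (eV u) = 0) (H_eE : forall f, H (eE f) = 0).
Hypotheses (H_eT : forall f, 0 < H (eT f)) (H_eL : forall f, 0 < H (eL f))
  (H_eR : forall f, 0 < H (eR f)).

Definition supports c := forall p, pts p -> lin c p <= H p.
Definition face c := [set p | pts p /\ lin c p = H p].

Lemma lower_cell_face S : lower_cell src tgt H S -> exists2 c, supports c & S = face c.
Proof. by case=> c [c_le ->]; exists c. Qed.

Lemma supports_coord c : supports c <->
  (forall u, node_coord c u <= 0) /\
  (forall f, [/\ edge_coord c f <= 0,
     node_coord c (src f) + node_coord c (tgt f) - edge_coord c f <= H (eT f),
     node_coord c (src f) - node_coord c (tgt f) + edge_coord c f <= H (eL f) &
     - node_coord c (src f) + node_coord c (tgt f) + edge_coord c f <= H (eR f)]).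
Proof.
split=> [c_sup|[cV cE] p].
  split=> [u|f]; first by have := c_sup _ (pts_eV u); rewrite lin_eV H_eV.
  have := c_sup _ (pts_eE f); rewrite lin_eE H_eE => cE0.
  by split; rewrite // -?lin_eT -?lin_eL -?lin_eR; apply: c_sup;
    [apply: pts_eT|apply: pts_eL|apply: pts_eR].
case=> [[u ->]|[f q_f]]; first by rewrite lin_eV H_eV.
have [cE0 cT cL cR] := cE f.
by case: q_f => [->|[->|[->|->]]]; rewrite ?lin_eE ?H_eE ?lin_eT ?lin_eL ?lin_eR.
Qed.

Section Incompatible.
Variables (c : 'cV[R]_(n + m)) (f : 'I_m).
Hypothesis c_sup : supports c.

Let c_node : node_coord c (src f) <= 0 /\ node_coord c (tgt f) <= 0.
Proof. by have [c_le0 _] := (supports_coord c).1 c_sup; rewrite !c_le0. Qed.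

Let c_edge : edge_coord c f <= 0.
Proof. by have [_ /(_ f)[]] := (supports_coord c).1 c_sup. Qed.

Lemma face_eT_eE : face c (eT f) -> ~ face c (eE f).
Proof.
move=> [_]; rewrite lin_eT => cT [_]; rewrite lin_eE H_eE.
by have := H_eT f; have := c_node; lra.
Qed.

Lemma face_eT_eL : face c (eT f) -> ~ face c (eL f).
Proof.
move=> [_]; rewrite lin_eT => cT [_]; rewrite lin_eL.
by have := H_eT f; have := H_eL f; have := c_node; lra.
Qed.

Lemma face_eT_eR : face c (eT f) -> ~ face c (eR f).
Proof.
move=> [_]; rewrite lin_eT => cT [_]; rewrite lin_eR.
by have := H_eT f; have := H_eR f; have := c_node; lra.
Qed.

Lemma face_eL_eR : face c (eL f) -> ~ face c (eR f).
Proof.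
move=> [_]; rewrite lin_eL => cL [_]; rewrite lin_eR.
by have := H_eL f; have := H_eR f; have := c_edge; lra.
Qed.

End Incompatible.

Lemma face_sub_pts c : face c `<=` pts.
Proof. by move=> p []. Qed.

Lemma face_diff c c' p : face c p -> face c' p -> lin (c - c') p = 0.
Proof. by move=> [_ cp] [_ c'p]; rewrite lin_subc cp c'p subrr. Qed.

Definition prescribed (E1 D : {set 'I_m}) left (S : set 'rV[R]_(n + m)) :=
  [/\ forall f, squiggly src tgt S f <-> f \in E1,
      forall f, double_edge src tgt S f <-> f \in D
    & forall f, f \in D -> S (arrow left f)].

Section Uniqueness.
Variables (E1 D : {set 'I_m}) (left : 'I_m -> bool) (c1 c2 : 'cV[R]_(n + m)).
Hypotheses (c1_sup : supports c1) (c2_sup : supports c2).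
Hypotheses (c1_pre : prescribed E1 D left (face c1)) (c2_pre : prescribed E1 D left (face c2)).
Hypothesis c2_full : full_dim (face c2).

Lemma double_node_coord_diff f : f \in D ->
  node_coord (c1 - c2) (src f) = node_coord (c1 - c2) (tgt f).
Proof.
have [_ D1 arrow1] := c1_pre; have [_ D2 arrow2] := c2_pre.
move=> fD; have [_ [_ E1f]] := (D1 f).2 fD; have [_ [_ E2f]] := (D2 f).2 fD.
have := face_diff (arrow1 f fD) (arrow2 f fD); have := face_diff E1f E2f.
by rewrite lin_eE lin_arrow => ->; case: (left f); lra.
Qed.

(* Detects the nodes where [c1] exceeds [c2]; the edge values are chosen so
   that the functional vanishes on [face c2], which forces it to be zero. *)
Let chi u : R := if 0 < node_coord (c1 - c2) u then 1 else 0.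
Let kappa f : R :=
  if lin c2 (eE f) == H (eE f) then 0
  else if lin c2 (eT f) == H (eT f) then chi (src f) + chi (tgt f)
  else if lin c2 (eL f) == H (eL f) then chi (tgt f) - chi (src f)
  else chi (src f) - chi (tgt f).

Lemma excess_fun_vanish p : face c2 p -> lin (coord_vec chi kappa) p = 0.
Proof.
have [_ D2 _] := c2_pre.
have double_chi f : face c2 (eE f) -> face c2 (eL f) \/ face c2 (eR f) ->
    chi (src f) = chi (tgt f).
  move=> Ef LRf; suff fD : f \in D by rewrite /chi double_node_coord_diff.
  by apply/D2; split; [exact: forest_no_loop|split].
have face_eq q : face c2 q -> (lin c2 q == H q) = true by move=> [_ ->]; rewrite eqxx.
have face_neq q : ~ face c2 q -> pts q -> (lin c2 q == H q) = false.
  by move=> nq Pq; apply/negbTE/eqP => cq; apply: nq.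
move=> fp; have [Pp cp] := fp.
case: Pp => [[u pq]|[f [pq|[pq|[pq|pq]]]]]; rewrite {}pq in fp cp *.
- rewrite lin_eV node_coord_vec /chi ltNge node_coordB.
  have := (supports_coord c1).1 c1_sup; rewrite lin_eV H_eV in cp.
  by case=> /(_ u) c1u _; rewrite cp subr0 c1u.
- by rewrite lin_eE edge_coord_vec /kappa face_eq.
- rewrite lin_eT !node_coord_vec edge_coord_vec /kappa (face_eq _ fp).
  by rewrite (face_neq _ (face_eT_eE c2_sup fp) (pts_eE f)) subrr.
- rewrite lin_eL !node_coord_vec edge_coord_vec /kappa (face_eq _ fp).
  have [fE|nfE] := pselect (face c2 (eE f)).
    by rewrite (face_eq _ fE) (double_chi f fE (or_introl fp)) subrr addr0.
  rewrite (face_neq _ nfE (pts_eE f)).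
  rewrite (face_neq _ (fun fT => face_eT_eL c2_sup fT fp) (pts_eT f)); lra.
- rewrite lin_eR !node_coord_vec edge_coord_vec /kappa.
  have [fE|nfE] := pselect (face c2 (eE f)).
    by rewrite (face_eq _ fE) (double_chi f fE (or_intror fp)) addNr add0r.
  rewrite (face_neq _ nfE (pts_eE f)).
  rewrite (face_neq _ (fun fT => face_eT_eR c2_sup fT fp) (pts_eT f)).
  rewrite (face_neq _ (fun fL => face_eL_eR c2_sup fL fp) (pts_eL f)); lra.
Qed.

Lemma face_node_le u : node_coord c1 u <= node_coord c2 u.
Proof.
have chi0 : chi u = 0.
  by rewrite -(node_coord_vec chi kappa u) (c2_full excess_fun_vanish) node_coord0.
rewrite -subr_le0 -node_coordB; move: chi0; rewrite /chi.
by case: ltP => // _ /eqP; rewrite oner_eq0.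
Qed.

Lemma face_edge_le : (forall u, node_coord c1 u = node_coord c2 u) ->
  forall f, edge_coord c1 f <= edge_coord c2 f.
Proof.
have [T1 _ _] := c1_pre; have [T2 _ _] := c2_pre.
move=> same_node f.
have tight1 q : face c2 q -> lin c1 q <= lin c2 q by move=> [Pq ->]; apply: c1_sup.
case: (full_dim_edge_point f (@face_sub_pts c2) c2_full) => [|[|[]]] fq; have := tight1 _ fq.
- by rewrite !lin_eE.
- have := face_diff ((T1 f).2 ((T2 f).1 fq)) fq.
  by rewrite lin_subc !lin_eT !same_node; lra.
- by rewrite !lin_eL !same_node; lra.
- by rewrite !lin_eR !same_node; lra.
Qed.

End Uniqueness.

Lemma prescribed_cell_unique E1 D left S1 S2 :
  max_cell src tgt H S1 -> prescribed E1 D left S1 ->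
  max_cell src tgt H S2 -> prescribed E1 D left S2 -> S1 = S2.
Proof.
move=> [/lower_cell_face[c1 c1_sup ->] full1] pre1.
move=> [/lower_cell_face[c2 c2_sup ->] full2] pre2.
have node_eq u : node_coord c1 u = node_coord c2 u.
  by apply/eqP; rewrite eq_le !(face_node_le _ _ pre1 pre2, face_node_le _ _ pre2 pre1).
suff -> : c1 = c2 by [].
apply: coord_inj => // f; apply/eqP; rewrite eq_le.
by rewrite (face_edge_le c1_sup pre1 pre2) ?(face_edge_le c2_sup pre2 pre1).
Qed.

Section Existence.
Variables (E1 D : {set 'I_m}) (left : 'I_m -> bool).
Hypothesis E1_D : forall f, f \in E1 -> f \notin D.
Hypothesis simplicial : forall S, max_cell src tgt H S -> has_card S (n + m).

Definition arrow_slope f := if left f then H (eL f) else - H (eR f).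

Section Cell.
Variable y : 'I_n -> R.
Hypothesis y_pot : anchored_potential src tgt arrow_slope D y.

Let gapL f := H (eL f) - y (src f) + y (tgt f).
Let gapR f := H (eR f) + y (src f) - y (tgt f).

(* On edges outside [D] and [E1] the edge value is pushed up to the largest
   value allowed by [eE f], [eL f] and [eR f]. *)
Definition cell_edge f :=
  if f \in D then 0
  else if f \in E1 then y (src f) + y (tgt f) - H (eT f)
  else Num.min 0 (Num.min (gapL f) (gapR f)).

Definition cell_fun := coord_vec y cell_edge.

Lemma cell_edge_free f : f \notin D -> f \notin E1 ->
  [/\ cell_edge f <= 0, cell_edge f <= gapL f, cell_edge f <= gapR f &
      cell_edge f = 0 \/ cell_edge f = gapL f \/ cell_edge f = gapR f].
Proof.
move=> /negbTE fD /negbTE fE1; rewrite /cell_edge fD fE1 !minEle.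
have [ab|ab] := leP (gapL f) (gapR f);
  [case: (leP 0 (gapL f)) => ?|case: (leP 0 (gapR f)) => ?];
  by split; try lra; first [by left|by right; left|by right; right].
Qed.

Lemma cell_supports : supports cell_fun.
Proof.
have [y_le0 y_slope _] := y_pot.
apply/supports_coord; split=> [u|f]; rewrite ?node_coord_vec ?edge_coord_vec //.
have := y_le0 (src f); have := y_le0 (tgt f).
have := H_eT f; have := H_eL f; have := H_eR f.
have [fD|fD] := boolP (f \in D).
  have := y_slope f fD; rewrite /cell_edge fD /arrow_slope.
  by case: (left f) => *; split; lra.
have [fE1|fE1] := boolP (f \in E1).
  by rewrite /cell_edge (negbTE fD) fE1 => *; split; lra.
have [z_le0 zL zR z_cases] := cell_edge_free fD fE1.
rewrite /gapL /gapR in zL zR z_cases.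
by case: z_cases => [|[|]] z_eq *; split; lra.
Qed.

Lemma cell_face_eV r : y r = 0 -> face cell_fun (eV r).
Proof. by split; [exact: pts_eV|rewrite lin_eV node_coord_vec H_eV]. Qed.

Lemma cell_face_eE f : cell_edge f = 0 -> face cell_fun (eE f).
Proof. by split; [exact: pts_eE|rewrite lin_eE edge_coord_vec H_eE]. Qed.

Lemma cell_face_D f : f \in D -> face cell_fun (eE f) /\ face cell_fun (arrow left f).
Proof.
have [_ y_slope _] := y_pot; move=> fD.
have z0 : cell_edge f = 0 by rewrite /cell_edge fD.
split; first exact: cell_face_eE.
split; first by rewrite /arrow; case: (left f); [exact: pts_eL|exact: pts_eR].
have := y_slope f fD; rewrite lin_arrow !node_coord_vec edge_coord_vec z0 /arrow_slope /arrow.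
by case: (left f) => ?; lra.
Qed.

Lemma cell_node_vanish g : (forall r, y r = 0 -> lin g (eV r) = 0) ->
  {in D, forall f, lin g (eE f) = 0 /\ lin g (arrow left f) = 0} ->
  forall u, node_coord g u = 0.
Proof.
have [_ _ anchor] := y_pot; move=> g_anchor g_D u.
have [r yr [s [s_end _ sD]]] := anchor u.
have g_const : {in D, forall f, node_coord g (src f) = node_coord g (tgt f)}.
  move=> f /g_D[]; rewrite lin_eE lin_arrow => ->.
  by case: (left f); lra.
have [-> _] := trail_end_invariant g_const s_end sD.
by rewrite -lin_eV g_anchor.
Qed.

Lemma cell_full : full_dim (face cell_fun).
Proof.
move=> g g_face.
have g_node := cell_node_vanish (fun r yr => g_face _ (cell_face_eV yr))
  (fun f fD => let: conj E A := cell_face_D fD in conj (g_face _ E) (g_face _ A)).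
apply: coord_inj => [u|f]; rewrite ?node_coord0 ?edge_coord0; first exact: g_node.
have [fD|fD] := boolP (f \in D).
  by rewrite -lin_eE; apply: g_face; exact: (cell_face_D fD).1.
have [fE1|fE1] := boolP (f \in E1).
  have fT : face cell_fun (eT f).
    split; first exact: pts_eT.
    by rewrite lin_eT !node_coord_vec edge_coord_vec /cell_edge (negbTE fD) fE1; lra.
  by have := g_face _ fT; rewrite lin_eT !g_node; lra.
have [_ _ _ [z0|[zL|zR]]] := cell_edge_free fD fE1.
- by rewrite -lin_eE; apply: g_face; exact: cell_face_eE.
- have fL : face cell_fun (eL f).
    by split; [exact: pts_eL|rewrite lin_eL !node_coord_vec edge_coord_vec zL /gapL; lra].
  by have := g_face _ fL; rewrite lin_eL !g_node; lra.
- have fR : face cell_fun (eR f).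
    by split; [exact: pts_eR|rewrite lin_eR !node_coord_vec edge_coord_vec zR /gapR; lra].
  by have := g_face _ fR; rewrite lin_eR !g_node; lra.
Qed.

Lemma cell_max : max_cell src tgt H (face cell_fun).
Proof. by split; [exists cell_fun; split; [exact: cell_supports|]|exact: cell_full]. Qed.

(* A simplex is affinely independent, whereas [eL f - eE f] and [eR f - eE f]
   are spanned by the node vectors, all of which the face reaches through
   [D]-trails from its anchors. *)
Lemma cell_no_tie f b : f \notin D -> face cell_fun (eE f) ->
  ~ face cell_fun (arrow (fun=> b) f).
Proof.
move=> fD fE fq.
have [g gq g_sep] := full_dim_card_separate (simplicial cell_max) cell_full fq.
have q_std p : std_simplex p -> p != arrow (fun=> b) f.
  by move=> p_std; apply/eqP => pq; move: p_std; rewrite pq; apply/arrow_not_std/forest_no_loop.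
have g_node : forall u, node_coord g u = 0.
  apply: cell_node_vanish => [r yr|e eD].
    by apply: g_sep; [exact: cell_face_eV|apply: q_std; left; exists r].
  have [eE eA] := cell_face_D eD; split; apply: g_sep => //.
    by apply: q_std; right; exists e.
  apply/eqP => /(congr1 (lin (edge_fun f))); rewrite !lin_edge_fun_arrow eqxx.
  by case: eqP => [ef|_] /=; [rewrite -ef eD in fD|lra].
have g_edge : edge_coord g f = 0.
  by rewrite -lin_eE; apply: g_sep => //; apply: q_std; right; exists f.
by move: gq; rewrite lin_arrow !g_node g_edge subrr addr0 if_same eqxx.
Qed.

Lemma cell_prescribed : prescribed E1 D left (face cell_fun).
Proof.
have [y_le0 _ _] := y_pot.
have fT_E1 f : face cell_fun (eT f) <-> f \in E1.
  split=> [[_]|fE1]; last first.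
    split; first exact: pts_eT.
    by rewrite lin_eT !node_coord_vec edge_coord_vec /cell_edge (negbTE (E1_D fE1)) fE1; lra.
  rewrite lin_eT !node_coord_vec edge_coord_vec.
  have := H_eT f; have := H_eL f; have := H_eR f; have := y_le0 (src f); have := y_le0 (tgt f).
  have [fD|fD] := boolP (f \in D); first by rewrite /cell_edge fD; lra.
  have [//|fE1] := boolP (f \in E1).
  have [_ _ _ z_cases] := cell_edge_free fD fE1; rewrite /gapL /gapR in z_cases.
  by case: z_cases => [|[|]] ->; lra.
split=> // f; last by case/cell_face_D.
split=> [[_ [fLR fE]]|fD]; last first.
  have [fE fA] := cell_face_D fD; split; first exact: forest_no_loop.
  by split=> //; move: fA; rewrite /arrow; case: (left f); [left|right].
have [//|fD] := boolP (f \in D); exfalso.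
have [fE1|fE1] := boolP (f \in E1).
  by have := face_eT_eE cell_supports ((fT_E1 f).2 fE1) fE.
by case: fLR; [apply: (cell_no_tie (b := true))|apply: (cell_no_tie (b := false))].
Qed.

End Cell.

Lemma prescribed_cell_exists : exists2 S, max_cell src tgt H S & prescribed E1 D left S.
Proof.
have [y y_pot] := exists_anchored_potential arrow_slope forestG D.
by exists (face (cell_fun y)); [exact: cell_max|exact: cell_prescribed].
Qed.

End Existence.

End ReducedHeight.

Theorem mainTheorem5 (R : realType) (n m : nat) (src tgt : 'I_m -> 'I_n)
    (h : 'rV[R]_(n + m) -> R) (E1 D : {set 'I_m}) (left : 'I_m -> bool) :
  is_forest src tgt ->
  good_height src tgt h ->
  (forall f, f \in E1 -> f \notin D) ->
  exists! S : set 'rV[R]_(n + m),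
    [/\ max_cell src tgt h S,
        (forall f, squiggly src tgt S f <-> f \in E1),
        (forall f, double_edge src tgt S f <-> f \in D)
      & (forall f, f \in D ->
           S (if left f then eL R src tgt f else eR R src tgt f))].
Proof.
move=> forestG [simplicial _ [[c0 [c0_le std_cell]] _]] E1_D.
pose H p := h p - lin c0 p.
have maxE S : max_cell src tgt h S <-> max_cell src tgt H S := max_cell_shift h c0 S.
have H0 := std_cell_height0 std_cell.
have Hpos := std_cell_height_gt0 std_cell c0_le.
have no_loop f := forest_no_loop f forestG.
have H_eV u : H (eV R m u) = 0 by apply: H0; left; exists u.
have H_eE f : H (eE R n f) = 0 by apply: H0; right; exists f.
have H_eT f : 0 < H (eT R src tgt f) by apply: Hpos; [exact: pts_eT|exact: eT_not_std].
have H_eL f : 0 < H (eL R src tgt f) by apply: Hpos; [exact: pts_eL|exact/eL_not_std/no_loop].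
have H_eR f : 0 < H (eR R src tgt f) by apply: Hpos; [exact: pts_eR|exact/eR_not_std/no_loop].
have simplicialH S : max_cell src tgt H S -> has_card S (n + m) by move/maxE/simplicial.
have [S S_max S_pre] :=
  prescribed_cell_exists forestG H_eV H_eE H_eT H_eL H_eR left E1_D simplicialH.
exists S; split; first by case: S_pre; split=> //; apply/maxE.
move=> S' [/maxE S'_max S'_E1 S'_D S'_arrow].
exact: (prescribed_cell_unique forestG H_eV H_eE H_eT H_eL H_eR S_max S_pre S'_max).
Qed.
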